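(* Let $0<\alpha<1$, $\bar\alpha=1-\alpha$, $c=(1+\bar\alpha\alpha^{\alpha/\bar\alpha})^{-1}$. Define functions $P_0,P_1$ on $\{0,1\}^n$ for all $n\ge0$ recursively by $P_0(\emptyset)=P_1(\emptyset)=1$ and, for $u\in\{0,1\}^{n-1}$, $P_0(0,u)=c\big(P_0(u)-\alpha^{1/\bar\alpha}P_1(u)\big)$, $P_0(1,u)=c\,\alpha^{\alpha/\bar\alpha}P_1(u)$, $P_1(0,u)=c\,\alpha^{\alpha/\bar\alpha}P_0(u)$, $P_1(1,u)=c\big(P_1(u)-\alpha^{1/\bar\alpha}P_0(u)\big)$. Then there exists $\beta$ with $1\le\beta\le\alpha^{-1/\bar\alpha}$ such that for every $n\ge1$: if $\beta P_1(u)\ge P_0(u)$ and $\beta P_0(u)\ge P_1(u)$ for all $u\in\{0,1\}^{n-1}$, then $\beta P_1(x)\ge P_0(x)$ and $\beta P_0(x)\ge P_1(x)$ for all $x\in\{0,1\}^n$.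
   Context: $(0,u)$ denotes the sequence with first coordinate $0$ followed by $u$. *)

From Stdlib Require Import Reals List.
Open Scope R_scope.

Definition cst (alpha : R) : R :=
  / (1 + (1 - alpha) * Rpower alpha (alpha / (1 - alpha))).

(* Elements of {0,1}^n are lists of booleans of length n
   (false = 0, true = 1); the head is the first coordinate, so
   (b :: u) is the sequence (b,u).  PP alpha u = (P_0(u), P_1(u)). *)
Fixpoint PP (alpha : R) (u : list bool) : R * R :=
  match u with
  | nil => (1, 1)
  | b :: u' =>
      let p0 := fst (PP alpha u') in
      let p1 := snd (PP alpha u') in
      let c := cst alpha in
      let e1 := Rpower alpha (alpha / (1 - alpha)) in
      let e2 := Rpower alpha (1 / (1 - alpha)) in
      if b then (c * e1 * p1, c * (p1 - e2 * p0))
      else (c * (p0 - e2 * p1), c * e1 * p0)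
  end.

Definition P0 (alpha : R) (u : list bool) : R := fst (PP alpha u).
Definition P1 (alpha : R) (u : list bool) : R := snd (PP alpha u).

(** Write [t = alpha^(alpha/abar)], so that [alpha^(1/abar) = alpha t].  Up to
    the positive factor [c], and a swap of coordinates when the first bit is 1,
    one recursion step is the linear map [(p0, p1) |-> (p0 - alpha t p1, t p0)],
    which acts on the ratio [r = p1 / p0] by [r |-> t / (1 - alpha t r)].  Its
    fixed point [beta], the larger root of [alpha t beta^2 - beta + t = 0], is
    real because [4 alpha t^2 = 4 alpha^((1+alpha)/abar) <= 4 e^(-8/5) < 1].
    The cone [1/beta <= r <= beta] is then mapped into itself: the upper end is
    fixed, and the lower end stays above [1/beta] because [beta >= t (1+alpha)]. *)
From Stdlib Require Import Reals List Lra Lia Psatz.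
Open Scope R_scope.

Lemma exp_gt_4 : 4 < exp (8 / 5).
Proof.
  assert (Hpow : exp (8 / 5) = exp (1 / 5) ^ 8).
  { rewrite <- Rpower_pow by apply exp_pos.
    unfold Rpower; rewrite ln_exp; f_equal; simpl; lra. }
  assert (Hlow : (6 / 5) ^ 8 <= exp (1 / 5) ^ 8).
  { apply pow_incr; pose proof (exp_ineq1_le (1 / 5)); lra. }
  rewrite Hpow; simpl in Hlow; lra.
Qed.

Lemma ln_le_sub_1 (s : R) : 0 < s -> ln s <= s - 1.
Proof.
  intro Hs; pose proof (exp_ineq1_le (ln s)); rewrite exp_ln in * by exact Hs; lra.
Qed.

(* [ln a <= 2 (sqrt a - 1)], and [2 (1 + s^2) / (1 + s) >= 8/5] on [0, 1]. *)
Lemma ratio_mul_ln_le (a : R) : 0 < a < 1 -> (1 + a) / (1 - a) * ln a <= - (8 / 5).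
Proof.
  intro Ha.
  set (s := sqrt a).
  assert (Hs : 0 < s) by (apply sqrt_lt_R0; lra).
  assert (Hss : s * s = a) by (apply sqrt_sqrt; lra).
  assert (Hs1 : s < 1) by nra.
  assert (Hln : ln a <= 2 * (s - 1)).
  { rewrite <- Hss, ln_mult by lra; pose proof (ln_le_sub_1 s Hs); lra. }
  assert (Hratio : 0 < (1 + a) / (1 - a)) by (apply Rdiv_lt_0_compat; lra).
  apply Rle_trans with ((1 + a) / (1 - a) * (2 * (s - 1))).
  - apply Rmult_le_compat_l; lra.
  - rewrite <- Hss.
    replace ((1 + s * s) / (1 - s * s) * (2 * (s - 1)))
      with (- (2 * (1 + s * s)) / (1 + s)) by (field; nra).
    apply Rmult_le_reg_r with (1 + s); [lra|].
    unfold Rdiv; rewrite Rmult_assoc, Rinv_l by lra.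
    pose proof (pow2_ge_0 (5 * s - 2)); nra.
Qed.

Lemma Rpower_ratio_lt_quarter (a : R) :
  0 < a < 1 -> Rpower a ((1 + a) / (1 - a)) < / 4.
Proof.
  intro Ha.
  apply Rle_lt_trans with (exp (- (8 / 5))).
  - unfold Rpower.
    destruct (Rle_lt_or_eq_dec _ _ (ratio_mul_ln_le a Ha)) as [Hlt | Heq].
    + left; apply exp_increasing, Hlt.
    + rewrite Heq; right; reflexivity.
  - rewrite exp_Ropp; pose proof exp_gt_4.
    apply Rinv_lt_contravar; lra.
Qed.

Definition in_cone (beta : R) (p : R * R) : Prop :=
  beta * snd p >= fst p /\ beta * fst p >= snd p.

Lemma in_cone_swap (beta p0 p1 : R) :
  in_cone beta (p0, p1) -> in_cone beta (p1, p0).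
Proof. unfold in_cone; simpl; tauto. Qed.

Lemma in_cone_scale (beta c p0 p1 : R) :
  0 < c -> in_cone beta (p0, p1) -> in_cone beta (c * p0, c * p1).
Proof. unfold in_cone; simpl; intros Hc [H1 H2]; split; nra. Qed.

Lemma in_cone_fst_nonneg (beta p0 p1 : R) :
  1 < beta -> in_cone beta (p0, p1) -> 0 <= p0.
Proof.
  unfold in_cone; simpl; intros Hb [H1 H2].
  assert (0 <= beta * (beta * p0 - p1)) by (apply Rmult_le_pos; lra).
  destruct (Rle_or_lt 0 p0) as [| Hneg]; [assumption|].
  assert ((beta * beta - 1) * p0 < 0) by (apply Rmult_pos_neg; nra).
  nra.
Qed.

Section ConeStep.

Variables a t beta : R.
Hypotheses (Ha : 0 < a < 1) (Ht : 0 < t) (Hb : 1 < beta).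
Hypothesis Hroot : a * t * beta * beta + t = beta.
Hypothesis Hbig : t * (1 + a) <= beta.

Lemma cone_lower_quadratic_nonneg : t * beta * beta - beta + a * t >= 0.
Proof.
  apply Rle_ge, Rmult_le_reg_l with a; [lra|].
  replace (a * (t * beta * beta - beta + a * t))
    with ((1 - a) * (beta - t * (1 + a))) by nra.
  nra.
Qed.

Lemma in_cone_step (p0 p1 : R) :
  in_cone beta (p0, p1) -> in_cone beta (p0 - a * t * p1, t * p0).
Proof.
  intro Hp.
  assert (Hp0 : 0 <= p0) by exact (in_cone_fst_nonneg _ _ _ Hb Hp).
  destruct Hp as [H1 H2]; simpl in H1, H2; unfold in_cone; simpl.
  pose proof cone_lower_quadratic_nonneg as Hq.
  split.
  - (* times [beta], the gap is [(t beta^2 - beta + a t) p0 + a t (beta p1 - p0)] *)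
    apply Rle_ge, Rmult_le_reg_l with beta; [lra|].
    assert (0 <= a * t * (beta * p1 - p0)) by (apply Rmult_le_pos; nra).
    nra.
  - (* the gap is [a beta t (beta p0 - p1)], by the fixed-point equation *)
    assert (0 <= a * beta * t * (beta * p0 - p1)) by (apply Rmult_le_pos; nra).
    nra.
Qed.

End ConeStep.

Definition cone_ratio (a t : R) : R := (1 + sqrt (1 - 4 * a * t * t)) / (2 * a * t).

Section ConeRatio.

Variables a t : R.
Hypotheses (Ha : 0 < a < 1) (Ht : 0 < t) (Hdisc : 4 * a * t * t <= 1).

Let d := sqrt (1 - 4 * a * t * t).

Let d_nonneg : 0 <= d := sqrt_pos _.

Let d_sq : d * d = 1 - 4 * a * t * t.
Proof. apply sqrt_sqrt; lra. Qed.

Lemma cone_ratio_mul : cone_ratio a t * (2 * a * t) = 1 + d.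
Proof. unfold cone_ratio, d; field; nra. Qed.

Lemma cone_ratio_root :
  a * t * cone_ratio a t * cone_ratio a t + t = cone_ratio a t.
Proof.
  pose proof cone_ratio_mul as Hm.
  apply Rmult_eq_reg_r with (4 * a * t); [|nra].
  replace ((a * t * cone_ratio a t * cone_ratio a t + t) * (4 * a * t))
    with ((cone_ratio a t * (2 * a * t)) ^ 2 + 4 * a * t * t) by ring.
  replace (cone_ratio a t * (4 * a * t)) with (2 * (cone_ratio a t * (2 * a * t)))
    by ring.
  rewrite Hm; nra.
Qed.

Lemma cone_ratio_gt_1 : 1 < cone_ratio a t.
Proof.
  pose proof cone_ratio_mul as Hm.
  apply Rmult_lt_reg_r with (2 * a * t); [nra|].
  rewrite Hm; nra.
Qed.

Lemma cone_ratio_ge : t * (1 + a) <= cone_ratio a t.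
Proof.
  pose proof cone_ratio_mul as Hm.
  apply Rmult_le_reg_r with (2 * a * t); [nra|].
  rewrite Hm; nra.
Qed.

Lemma cone_ratio_le_inv : cone_ratio a t <= / (a * t).
Proof.
  pose proof cone_ratio_mul as Hm.
  apply Rmult_le_reg_r with (2 * a * t); [nra|].
  rewrite Hm; replace (/ (a * t) * (2 * a * t)) with 2 by (field; nra).
  nra.
Qed.

End ConeRatio.

Lemma Rpower_inv_one_sub (alpha : R) : 0 < alpha < 1 ->
  Rpower alpha (1 / (1 - alpha)) = alpha * Rpower alpha (alpha / (1 - alpha)).
Proof.
  intro Ha.
  replace (1 / (1 - alpha)) with (1 + alpha / (1 - alpha)) by (field; lra).
  rewrite Rpower_plus, Rpower_1 by lra; reflexivity.
Qed.

Lemma four_mul_Rpower_sq_le_1 (alpha : R) : 0 < alpha < 1 ->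
  4 * alpha * Rpower alpha (alpha / (1 - alpha)) * Rpower alpha (alpha / (1 - alpha))
  <= 1.
Proof.
  intro Ha.
  assert (E : alpha * Rpower alpha (alpha / (1 - alpha)) * Rpower alpha (alpha / (1 - alpha))
              = Rpower alpha ((1 + alpha) / (1 - alpha))).
  { replace ((1 + alpha) / (1 - alpha))
      with (1 + alpha / (1 - alpha) + alpha / (1 - alpha)) by (field; lra).
    rewrite !Rpower_plus, Rpower_1 by lra; reflexivity. }
  pose proof (Rpower_ratio_lt_quarter alpha Ha); nra.
Qed.

Lemma cst_pos (alpha : R) : 0 < alpha < 1 -> 0 < cst alpha.
Proof.
  intro Ha; unfold cst; apply Rinv_0_lt_compat.
  pose proof (exp_pos (alpha / (1 - alpha) * ln alpha)); unfold Rpower; nra.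
Qed.

Lemma in_cone_PP_cons (alpha beta : R) (b : bool) (u : list bool) :
  0 < alpha < 1 -> 1 < beta ->
  alpha * Rpower alpha (alpha / (1 - alpha)) * beta * beta
    + Rpower alpha (alpha / (1 - alpha)) = beta ->
  Rpower alpha (alpha / (1 - alpha)) * (1 + alpha) <= beta ->
  in_cone beta (PP alpha u) -> in_cone beta (PP alpha (b :: u)).
Proof.
  intros Ha Hb Hroot Hbig.
  assert (Ht : 0 < Rpower alpha (alpha / (1 - alpha))) by apply exp_pos.
  pose proof (cst_pos alpha Ha) as Hc.
  simpl; rewrite Rpower_inv_one_sub by exact Ha.
  destruct (PP alpha u) as [p0 p1]; simpl; intro Hp.
  set (t := Rpower alpha (alpha / (1 - alpha))) in *.
  destruct b.
  - replace (cst alpha * t * p1, cst alpha * (p1 - alpha * t * p0))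
      with (cst alpha * (t * p1), cst alpha * (p1 - alpha * t * p0))
      by (f_equal; ring).
    apply in_cone_scale, in_cone_swap, (in_cone_step alpha t beta); auto.
    apply in_cone_swap, Hp.
  - replace (cst alpha * (p0 - alpha * t * p1), cst alpha * t * p0)
      with (cst alpha * (p0 - alpha * t * p1), cst alpha * (t * p0))
      by (f_equal; ring).
    apply in_cone_scale, (in_cone_step alpha t beta); auto.
Qed.

Theorem lemma4 (alpha : R) (Ha : 0 < alpha < 1) :
  exists beta : R,
    1 <= beta <= Rpower alpha (- (1 / (1 - alpha))) /\
    forall n : nat, (1 <= n)%nat ->
      (forall u : list bool, length u = (n - 1)%nat ->
         beta * P1 alpha u >= P0 alpha u /\ beta * P0 alpha u >= P1 alpha u) ->
      forall x : list bool, length x = n ->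
         beta * P1 alpha x >= P0 alpha x /\ beta * P0 alpha x >= P1 alpha x.
Proof.
  pose proof (four_mul_Rpower_sq_le_1 alpha Ha) as Hdisc.
  set (t := Rpower alpha (alpha / (1 - alpha))) in *.
  assert (Ht : 0 < t) by apply exp_pos.
  pose proof (cone_ratio_gt_1 alpha t Ha Ht Hdisc) as Hgt.
  exists (cone_ratio alpha t); split.
  - split; [lra|].
    rewrite Rpower_Ropp, Rpower_inv_one_sub by exact Ha.
    exact (cone_ratio_le_inv alpha t Ha Ht Hdisc).
  - intros n Hn Hprev [|b u] Hx; simpl in Hx; [lia|].
    apply (in_cone_PP_cons alpha _ b u Ha Hgt).
    + exact (cone_ratio_root alpha t Ha Ht Hdisc).
    + exact (cone_ratio_ge alpha t Ha Ht Hdisc).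
    + apply Hprev; lia.
Qed.
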